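(* Let $K$ be a $b$-complete idempotent semiring, $X$ a nonempty set, and $V$ a $b$-complete functional semimodule on $X$. Then $V$ is a functional $b$-semimodule on $X$ (i.e., a $b$-subsemimodule of $K(X)$) if and only if every integral operator $A\colon V\to W$, for every $b$-complete semimodule $W$ over $K$, is $b$-linear.
   Context: Idempotent semigroup: commutative, associative, idempotent $\oplus$ with order $x\preceq y$ iff $x\oplus y=y$; $\oplus X$ least upper bound; $b$-complete: every bounded above subset (incl. $\emptyset$) has a least upper bound. A homomorphism of $b$-complete semigroups is a $b$-homomorphism if it preserves least upper bounds of bounded above subsets. Idempotent semiring: idempotent commutative associative $\oplus$, associative $\odot$ bi-distributive, unit $\mathbf 1$, zero $\mathbf 0$; $b$-complete if $b$-complete and $k\odot(\oplus X)=\oplus(k\odot X)$, $(\oplus X)\odot k=\oplus(X\odot k)$ for bounded $X$. Idempotent semimodule over $K$: idempotent semigroup with associative bi-distributive $K$-action, $\mathbf 1\odot x=x$, $\mathbf 0\odot x=\mathbf 0$; $b$-complete if $b$-complete as semigroup and $(\oplus Q)\odot x=\oplus(Q\odot x)$, $k\odot(\oplus X)=\oplus(k\odot X)$ for bounded $Q,X$. A map is linear if it preserves $\oplus$ and scalar multiplication; $b$-linear if moreover a $b$-homomorphism. A subsemimodule is a subset closed under $\oplus$ and scalar multiplication; a subsemimodule of a $b$-complete semimodule is a $b$-subsemimodule if the embedding is a $b$-homomorphism. If $W$ is $b$-complete and $V\subset W$ is closed under scalar multiplication and an upper semilattice in the induced order, $V$ is a quasisubsemimodule if it is a semimodule under $x\oplus_V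 y=$ least upper bound of $\{x,y\}$ in $V$. $K(X)$: all maps $X\to K$, pointwise operations. A functional semimodule on $X$ is a quasisubsemimodule of $K(X)$; $b$-complete if it is a $b$-complete semimodule; a functional $b$-semimodule if it is a $b$-subsemimodule of $K(X)$. A mapping $A\colon V\to W$ is an integral operator if there is a map $k\colon X\to W$ (kernel) such that for every $f\in V$ the set $\{f(x)\odot k(x)\mid x\in X\}$ is bounded in $W$ and $Af=\sup_{x\in X}(f(x)\odot k(x))$. *)

Definition ub {T : Type} (le : T -> T -> Prop) (S : T -> Prop) (b : T) : Prop :=
  forall x, S x -> le x b.
Definition is_lub {T : Type} (le : T -> T -> Prop) (S : T -> Prop) (s : T) : Prop :=
  ub le S s /\ forall b, ub le S b -> le s b.
Definition bounded {T : Type} (le : T -> T -> Prop) (S : T -> Prop) : Prop :=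
  exists b, ub le S b.
Definition b_complete_order {T : Type} (le : T -> T -> Prop) : Prop :=
  forall S : T -> Prop, bounded le S -> exists s, is_lub le S s.
Definition img {A B : Type} (f : A -> B) (S : A -> Prop) : B -> Prop :=
  fun y => exists x, S x /\ y = f x.
Definition pair_set {T : Type} (a b : T) : T -> Prop := fun x => x = a \/ x = b.
Definition subset_of {T : Type} (S V : T -> Prop) : Prop := forall x, S x -> V x.

Record idem_semiring := IdemSemiring {
  sr_car :> Type;
  sr_add : sr_car -> sr_car -> sr_car;
  sr_mul : sr_car -> sr_car -> sr_car;
  sr_zero : sr_car;
  sr_one : sr_car;
  sr_addA : forall x y z, sr_add x (sr_add y z) = sr_add (sr_add x y) z;
  sr_addC : forall x y, sr_add x y = sr_add y x;
  sr_addI : forall x, sr_add x x = x;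
  sr_add0 : forall x, sr_add sr_zero x = x;
  sr_mulA : forall x y z, sr_mul x (sr_mul y z) = sr_mul (sr_mul x y) z;
  sr_mulDl : forall x y z, sr_mul x (sr_add y z) = sr_add (sr_mul x y) (sr_mul x z);
  sr_mulDr : forall x y z, sr_mul (sr_add x y) z = sr_add (sr_mul x z) (sr_mul y z);
  sr_mul1l : forall x, sr_mul sr_one x = x;
  sr_mul1r : forall x, sr_mul x sr_one = x;
  sr_mul0l : forall x, sr_mul sr_zero x = sr_zero;
  sr_mul0r : forall x, sr_mul x sr_zero = sr_zero
}.

Definition sr_le (K : idem_semiring) (x y : K) : Prop := sr_add K x y = y.

Definition b_complete_semiring (K : idem_semiring) : Prop :=
  b_complete_order (sr_le K) /\
  (forall (S : K -> Prop) (s k : K), bounded (sr_le K) S -> is_lub (sr_le K) S s ->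
     is_lub (sr_le K) (img (sr_mul K k) S) (sr_mul K k s)) /\
  (forall (S : K -> Prop) (s k : K), bounded (sr_le K) S -> is_lub (sr_le K) S s ->
     is_lub (sr_le K) (img (fun x => sr_mul K x k) S) (sr_mul K s k)).

Record idem_semimodule (K : idem_semiring) := IdemSemimodule {
  sm_car :> Type;
  sm_add : sm_car -> sm_car -> sm_car;
  sm_zero : sm_car;
  sm_smul : K -> sm_car -> sm_car;
  sm_addA : forall x y z, sm_add x (sm_add y z) = sm_add (sm_add x y) z;
  sm_addC : forall x y, sm_add x y = sm_add y x;
  sm_addI : forall x, sm_add x x = x;
  sm_smulA : forall (k l : K) x, sm_smul k (sm_smul l x) = sm_smul (sr_mul K k l) x;
  sm_smulDl : forall (k l : K) x, sm_smul (sr_add K k l) x = sm_add (sm_smul k x) (sm_smul l x);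
  sm_smulDr : forall (k : K) x y, sm_smul k (sm_add x y) = sm_add (sm_smul k x) (sm_smul k y);
  sm_smul1 : forall x, sm_smul (sr_one K) x = x;
  sm_smul0 : forall x, sm_smul (sr_zero K) x = sm_zero
}.

Arguments sm_add {K} i _ _.
Arguments sm_smul {K} i _ _.
Arguments sm_zero {K} i.

Definition sm_le (K : idem_semiring) (W : idem_semimodule K) (x y : W) : Prop :=
  sm_add W x y = y.

Arguments sm_le {K} W _ _.

Definition b_complete_semimodule {K : idem_semiring} (W : idem_semimodule K) : Prop :=
  b_complete_order (sm_le W) /\
  (forall (Q : K -> Prop) (q : K) (x : W), bounded (sr_le K) Q -> is_lub (sr_le K) Q q ->
     is_lub (sm_le W) (img (fun k => sm_smul W k x) Q) (sm_smul W q x)) /\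
  (forall (k : K) (S : W -> Prop) (s : W), bounded (sm_le W) S -> is_lub (sm_le W) S s ->
     is_lub (sm_le W) (img (sm_smul W k) S) (sm_smul W k s)).

Set Implicit Arguments.
Unset Strict Implicit.

Section Functional.
Variables (K : idem_semiring) (X : Type).

Definition fle (f g : X -> K) : Prop := forall x, sr_le K (f x) (g x).
Definition fadd (f g : X -> K) : X -> K := fun x => sr_add K (f x) (g x).
Definition fsmul (c : K) (f : X -> K) : X -> K := fun x => sr_mul K c (f x).
Definition fzero : X -> K := fun _ => sr_zero K.

Definition vlub (V : (X -> K) -> Prop) (S : (X -> K) -> Prop) (s : X -> K) : Prop :=
  V s /\ ub fle S s /\ forall b, V b -> ub fle S b -> fle s b.
Definition vbounded (V : (X -> K) -> Prop) (S : (X -> K) -> Prop) : Prop :=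
  exists b, V b /\ ub fle S b.

(* V is a quasisubsemimodule of K(X): closed under scalar multiplication,
   an upper semilattice in the induced order, and a semimodule for
   f (+)_V g := least upper bound of {f,g} in V. (Associativity, commutativity,
   idempotence of (+)_V, and the scalar axioms 1.f = f, k.(l.f) = (kl).f,
   0.f = 0 hold automatically; the remaining axioms are stated explicitly.) *)
Definition functional_semimodule (V : (X -> K) -> Prop) : Prop :=
  (forall c f, V f -> V (fsmul c f)) /\
  V fzero /\
  (forall f g, V f -> V g -> exists h, vlub V (pair_set f g) h) /\
  (forall (k : K) f g h, V f -> V g -> vlub V (pair_set f g) h ->
     vlub V (pair_set (fsmul k f) (fsmul k g)) (fsmul k h)) /\
  (forall (k l : K) f, V f ->
     vlub V (pair_set (fsmul k f) (fsmul l f)) (fsmul (sr_add K k l) f)).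

Definition b_complete_functional_semimodule (V : (X -> K) -> Prop) : Prop :=
  (forall S, subset_of S V -> vbounded V S -> exists s, vlub V S s) /\
  (forall (Q : K -> Prop) (q : K) f, V f -> bounded (sr_le K) Q -> is_lub (sr_le K) Q q ->
     vlub V (img (fun k => fsmul k f) Q) (fsmul q f)) /\
  (forall (k : K) S s, subset_of S V -> vbounded V S -> vlub V S s ->
     vlub V (img (fsmul k) S) (fsmul k s)).

(* V is a functional b-semimodule: a b-subsemimodule of K(X), i.e. closed under
   the operations of K(X) and the embedding preserves lubs of bounded subsets *)
Definition functional_b_semimodule (V : (X -> K) -> Prop) : Prop :=
  (forall f g, V f -> V g -> V (fadd f g)) /\
  (forall c f, V f -> V (fsmul c f)) /\
  (forall S s, subset_of S V -> vbounded V S -> vlub V S s -> is_lub fle S s).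

(* integral operators V -> W (values of A outside V are irrelevant) *)
Definition integral_operator (V : (X -> K) -> Prop) (W : idem_semimodule K)
    (A : (X -> K) -> W) : Prop :=
  exists k : X -> W, forall f, V f ->
    bounded (sm_le W) (fun w => exists x, w = sm_smul W (f x) (k x)) /\
    is_lub (sm_le W) (fun w => exists x, w = sm_smul W (f x) (k x)) (A f).

Definition b_linear (V : (X -> K) -> Prop) (W : idem_semimodule K)
    (A : (X -> K) -> W) : Prop :=
  (forall f g h, V f -> V g -> vlub V (pair_set f g) h -> A h = sm_add W (A f) (A g)) /\
  (forall c f, V f -> A (fsmul c f) = sm_smul W c (A f)) /\
  (forall S s, subset_of S V -> vbounded V S -> vlub V S s ->
     is_lub (sm_le W) (img A S) (A s)).

End Functional.

(* The identity map of V into K(X) is the integral operator with kernel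
   x |-> delta_x, and its b-linearity is exactly the statement that V is closed
   under the pointwise join and that lubs in V are pointwise lubs.  Conversely, if
   lubs in V are pointwise, then an integral operator f |-> sup_x f(x) k(x) commutes
   with them because scalar multiplication in a b-complete W distributes over
   bounded lubs in both arguments. *)

From Stdlib Require Import ClassicalEpsilon FunctionalExtensionality.

Set Implicit Arguments.
Unset Strict Implicit.

Section Semilattice.
Variables (T : Type) (join : T -> T -> T).
Hypothesis joinA : forall x y z, join x (join y z) = join (join x y) z.
Hypothesis joinC : forall x y, join x y = join y x.
Hypothesis joinI : forall x, join x x = x.

Lemma join_le_trans x y z : join x y = y -> join y z = z -> join x z = z.
Proof. intros Hxy Hyz. rewrite <- Hyz, joinA, Hxy. reflexivity. Qed.

Lemma join_le_antisym x y : join x y = y -> join y x = x -> x = y.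
Proof. intros Hxy Hyx. rewrite <- Hxy, <- Hyx at 1. apply joinC. Qed.

Lemma join_le_l x y : join x (join x y) = join x y.
Proof. rewrite joinA, joinI. reflexivity. Qed.

Lemma join_le_r x y : join y (join x y) = join x y.
Proof. rewrite (joinC x y). apply join_le_l. Qed.

Lemma join_le_least x y b : join x b = b -> join y b = b -> join (join x y) b = b.
Proof. intros Hx Hy. rewrite <- joinA, Hy, Hx. reflexivity. Qed.

End Semilattice.

Section SemiringOrder.
Variable K : idem_semiring.

Lemma sr_le_antisym (x y : K) : sr_le K x y -> sr_le K y x -> x = y.
Proof. exact (join_le_antisym (sr_addC K) (x:=x) (y:=y)). Qed.

Lemma sr_le_addl (x y : K) : sr_le K x (sr_add K x y).
Proof. exact (join_le_l (sr_addA K) (sr_addI K) x y). Qed.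

Lemma sr_le_addr (x y : K) : sr_le K y (sr_add K x y).
Proof. exact (join_le_r (sr_addA K) (sr_addC K) (sr_addI K) x y). Qed.

Lemma sr_le_add_least (x y b : K) : sr_le K x b -> sr_le K y b -> sr_le K (sr_add K x y) b.
Proof. exact (join_le_least (sr_addA K) (x:=x) (y:=y) (b:=b)). Qed.

Lemma sr_le0x (x : K) : sr_le K (sr_zero K) x.
Proof. apply sr_add0. Qed.

End SemiringOrder.

Section SemimoduleOrder.
Variables (K : idem_semiring) (W : idem_semimodule K).

Lemma sm_le_trans (x y z : W) : sm_le W x y -> sm_le W y z -> sm_le W x z.
Proof. exact (join_le_trans (sm_addA K W) (x:=x) (y:=y) (z:=z)). Qed.

Lemma sm_le_antisym (x y : W) : sm_le W x y -> sm_le W y x -> x = y.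
Proof. exact (join_le_antisym (sm_addC K W) (x:=x) (y:=y)). Qed.

Lemma sm_le_addl (x y : W) : sm_le W x (sm_add W x y).
Proof. exact (join_le_l (sm_addA K W) (sm_addI K W) x y). Qed.

Lemma sm_le_addr (x y : W) : sm_le W y (sm_add W x y).
Proof. exact (join_le_r (sm_addA K W) (sm_addC K W) (sm_addI K W) x y). Qed.

Lemma sm_le_add_least (x y b : W) : sm_le W x b -> sm_le W y b -> sm_le W (sm_add W x y) b.
Proof. exact (join_le_least (sm_addA K W) (x:=x) (y:=y) (b:=b)). Qed.

Lemma sm_le_smul2r (k l : K) (w : W) : sr_le K k l -> sm_le W (sm_smul W k w) (sm_smul W l w).
Proof. unfold sr_le, sm_le. intros Hkl. rewrite <- sm_smulDl, Hkl. reflexivity. Qed.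

End SemimoduleOrder.

Section Lubs.
Variables (T : Type) (le : T -> T -> Prop).

Lemma is_lub_eq_set (S S' : T -> Prop) s :
  (forall x, S x <-> S' x) -> is_lub le S s -> is_lub le S' s.
Proof.
  intros E [Hub Hleast]. split.
  - intros x Hx. apply Hub, E, Hx.
  - intros b Hb. apply Hleast. intros x Hx. apply Hb, E, Hx.
Qed.

Lemma is_lub_eq_le (le' : T -> T -> Prop) S s :
  (forall x y, le x y <-> le' x y) -> is_lub le S s -> is_lub le' S s.
Proof.
  intros E [Hub Hleast]. split.
  - intros x Hx. apply E, Hub, Hx.
  - intros b Hb. apply E, Hleast. intros x Hx. apply E, Hb, Hx.
Qed.

Lemma bounded_eq_le (le' : T -> T -> Prop) S :
  (forall x y, le x y <-> le' x y) -> bounded le S -> bounded le' S.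
Proof. intros E [b Hb]. exists b. intros x Hx. apply E, Hb, Hx. Qed.

Lemma is_lub_unique S a b :
  (forall x y, le x y -> le y x -> x = y) -> is_lub le S a -> is_lub le S b -> a = b.
Proof. intros Hanti [Ha1 Ha2] [Hb1 Hb2]. apply Hanti; [apply Ha2 | apply Hb2]; assumption. Qed.

End Lubs.

Section PointwiseOrder.
Variables (K : idem_semiring) (X : Type).

Definition evals (S : (X -> K) -> Prop) (x : X) : K -> Prop :=
  fun c => exists f, S f /\ c = f x.

Lemma fle_antisym (f g : X -> K) : fle f g -> fle g f -> f = g.
Proof.
  intros Hfg Hgf. apply functional_extensionality. intro x.
  apply sr_le_antisym; [apply Hfg | apply Hgf].
Qed.

(* The lub of S in K(X) is pointwise: to bound s x by an upper bound b of
   evals S x, compare s with the function equal to b at x and to s elsewhere. *)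
Lemma is_lub_fle_evals S s :
  is_lub (@fle K X) S s -> forall x, is_lub (sr_le K) (evals S x) (s x).
Proof.
  intros [Hub Hleast] x. split.
  - intros c [f [Sf ->]]. apply Hub, Sf.
  - intros b Hb.
    set (t := fun y => if excluded_middle_informative (y = x) then b else s y).
    assert (Hst : fle s t).
    { apply Hleast. intros f Sf y. unfold t.
      destruct (excluded_middle_informative (y = x)) as [->|_].
      - apply Hb. exists f. auto.
      - apply Hub, Sf. }
    specialize (Hst x). unfold t in Hst.
    destruct (excluded_middle_informative (x = x)) as [_|]; [exact Hst | congruence].
Qed.

Lemma is_lub_fle_pointwise S s :
  (forall x, is_lub (sr_le K) (evals S x) (s x)) -> is_lub (@fle K X) S s.
Proof.
  intros Hs. split.
  - intros f Sf x. apply (Hs x). exists f. auto.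
  - intros b Hb x. apply (Hs x). intros c [f [Sf ->]]. apply Hb, Sf.
Qed.

Lemma bounded_evals S s : is_lub (@fle K X) S s -> forall x, bounded (sr_le K) (evals S x).
Proof. intros Hs x. exists (s x). apply (is_lub_fle_evals Hs). Qed.

Definition fun_semimodule : idem_semimodule K.
Proof.
  refine (@IdemSemimodule K (X -> K) (@fadd K X) (@fzero K X) (@fsmul K X) _ _ _ _ _ _ _ _);
  intros; apply functional_extensionality; intro; unfold fadd, fsmul, fzero.
  - apply sr_addA.
  - apply sr_addC.
  - apply sr_addI.
  - apply sr_mulA.
  - apply sr_mulDr.
  - apply sr_mulDl.
  - apply sr_mul1l.
  - apply sr_mul0l.
Defined.

Lemma sm_le_fun_semimodule (f g : X -> K) : fle f g <-> sm_le fun_semimodule f g.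
Proof.
  split.
  - intros Hfg. apply functional_extensionality. exact Hfg.
  - intros Hfg x. exact (f_equal (fun h : X -> K => h x) Hfg).
Qed.

Lemma sm_le_fun_semimodule_fle (f g : X -> K) : sm_le fun_semimodule f g <-> fle f g.
Proof. symmetry. apply sm_le_fun_semimodule. Qed.

Hypothesis HK : b_complete_semiring K.

Lemma fle_b_complete : b_complete_order (@fle K X).
Proof.
  intros S [b Hb].
  assert (Hbx : forall x, bounded (sr_le K) (evals S x)).
  { intros x. exists (b x). intros c [f [Sf ->]]. apply Hb, Sf. }
  destruct (choice (fun x c => is_lub (sr_le K) (evals S x) c))
    as [s Hs]; [intros x; exact (proj1 HK _ (Hbx x)) |].
  exists s. apply is_lub_fle_pointwise, Hs.
Qed.

Lemma is_lub_fle_fsmull Q q f :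
  bounded (sr_le K) Q -> is_lub (sr_le K) Q q ->
  is_lub (@fle K X) (img (fun k => fsmul k f) Q) (fsmul q f).
Proof.
  intros HQ Hq. apply is_lub_fle_pointwise. intros x.
  apply (is_lub_eq_set (S := img (fun k => sr_mul K k (f x)) Q));
    [| exact (proj2 (proj2 HK) Q q (f x) HQ Hq)].
  intros c. split.
  - intros [k [Qk ->]]. exists (fsmul k f). split; [exists k; auto | reflexivity].
  - intros [g [[k [Qk ->]] ->]]. exists k. auto.
Qed.

Lemma is_lub_fle_fsmulr k S s :
  is_lub (@fle K X) S s -> is_lub (@fle K X) (img (fsmul k) S) (fsmul k s).
Proof.
  intros Hs. apply is_lub_fle_pointwise. intros x.
  apply (is_lub_eq_set (S := img (sr_mul K k) (evals S x)));
    [| exact (proj1 (proj2 HK) _ _ k (bounded_evals Hs x) (is_lub_fle_evals Hs x))].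
  intros c. split.
  - intros [d [[f [Sf ->]] ->]]. exists (fsmul k f). split; [exists f; auto | reflexivity].
  - intros [g [[f [Sf ->]] ->]]. exists (f x). split; [exists f; auto | reflexivity].
Qed.

Lemma fun_semimodule_b_complete : b_complete_semimodule fun_semimodule.
Proof.
  split; [| split].
  - intros S HS. apply (bounded_eq_le sm_le_fun_semimodule_fle) in HS.
    destruct (fle_b_complete HS) as [s Hs].
    exists s. exact (is_lub_eq_le sm_le_fun_semimodule Hs).
  - intros Q q f HQ Hq. exact (is_lub_eq_le sm_le_fun_semimodule (is_lub_fle_fsmull f HQ Hq)).
  - intros k S s _ Hs. apply (is_lub_eq_le sm_le_fun_semimodule_fle) in Hs.
    exact (is_lub_eq_le sm_le_fun_semimodule (is_lub_fle_fsmulr k Hs)).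
Qed.

End PointwiseOrder.

Section IntegralOperators.
Variables (K : idem_semiring) (X : Type) (W : idem_semimodule K).

Definition kernel_terms (k : X -> W) (f : X -> K) : W -> Prop :=
  fun w => exists x, w = sm_smul W (f x) (k x).

Lemma is_lub_kernel_terms_fadd k f g a b :
  is_lub (sm_le W) (kernel_terms k f) a -> is_lub (sm_le W) (kernel_terms k g) b ->
  is_lub (sm_le W) (kernel_terms k (fadd f g)) (sm_add W a b).
Proof.
  intros Ha Hb. split.
  - intros w [x ->]. unfold fadd. rewrite sm_smulDl. apply sm_le_add_least.
    + apply sm_le_trans with a; [apply Ha; exists x; reflexivity | apply sm_le_addl].
    + apply sm_le_trans with b; [apply Hb; exists x; reflexivity | apply sm_le_addr].
  - intros c Hc. apply sm_le_add_least; [apply Ha | apply Hb]; intros w [x ->];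
      apply sm_le_trans with (sm_smul W (fadd f g x) (k x));
      try (apply Hc; exists x; reflexivity);
      apply sm_le_smul2r; [apply sr_le_addl | apply sr_le_addr].
Qed.

Hypothesis HW : b_complete_semimodule W.

Lemma is_lub_kernel_terms_fsmul k f a c :
  bounded (sm_le W) (kernel_terms k f) -> is_lub (sm_le W) (kernel_terms k f) a ->
  is_lub (sm_le W) (kernel_terms k (fsmul c f)) (sm_smul W c a).
Proof.
  intros Hbd Ha. apply (is_lub_eq_set (S := img (sm_smul W c) (kernel_terms k f)));
    [| exact (proj2 (proj2 HW) c _ _ Hbd Ha)].
  intros w. split.
  - intros [u [[x ->] ->]]. exists x. unfold fsmul. rewrite sm_smulA. reflexivity.
  - intros [x ->]. exists (sm_smul W (f x) (k x)). split; [exists x; reflexivity |].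
    unfold fsmul. rewrite sm_smulA. reflexivity.
Qed.

(* Upper bounds of img A S dominate every [s x . k x], since [s x] is the bounded
   lub of the [f x], [f] in S, and [_ . k x] preserves such lubs. *)
Lemma is_lub_img_integral k (A : (X -> K) -> W) S s :
  (forall f, S f -> is_lub (sm_le W) (kernel_terms k f) (A f)) ->
  is_lub (sm_le W) (kernel_terms k s) (A s) -> is_lub (@fle K X) S s ->
  is_lub (sm_le W) (img A S) (A s).
Proof.
  intros HA HAs Hs. split.
  - intros w [f [Sf ->]]. apply (HA f Sf). intros w [x ->].
    apply sm_le_trans with (sm_smul W (s x) (k x));
      [apply sm_le_smul2r, (proj1 Hs f Sf x) | apply HAs; exists x; reflexivity].
  - intros b Hb. apply HAs. intros w [x ->].
    apply (proj1 (proj2 HW) _ _ (k x) (bounded_evals Hs x) (is_lub_fle_evals Hs x)).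
    intros w [c [[f [Sf ->]] ->]].
    apply sm_le_trans with (A f);
      [apply (HA f Sf); exists x; reflexivity | apply Hb; exists f; auto].
Qed.

Lemma integral_operator_b_linear V (A : (X -> K) -> W) :
  functional_b_semimodule V -> integral_operator V A -> b_linear V A.
Proof.
  intros [Vadd [Vsmul Vlub]] [k Hk]. split; [| split].
  - intros f g h Vf Vg Hh.
    assert (Eh : h = fadd f g).
    { destruct Hh as [_ [Hub Hleast]]. apply fle_antisym.
      - apply Hleast; [apply Vadd; assumption |].
        intros u [-> | ->] x; [apply sr_le_addl | apply sr_le_addr].
      - intros x. apply sr_le_add_least;
          [apply (Hub f) | apply (Hub g)]; unfold pair_set; auto. }
    subst h. apply (is_lub_unique (@sm_le_antisym K W) (proj2 (Hk _ (Vadd f g Vf Vg)))).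
    apply is_lub_kernel_terms_fadd; [apply (Hk f Vf) | apply (Hk g Vg)].
  - intros c f Vf.
    apply (is_lub_unique (@sm_le_antisym K W) (proj2 (Hk _ (Vsmul c f Vf)))).
    apply is_lub_kernel_terms_fsmul; apply (Hk f Vf).
  - intros S s HS Hbd Hs. apply is_lub_img_integral with (k := k).
    + intros f Sf. apply (Hk f (HS f Sf)).
    + apply (Hk s (proj1 Hs)).
    + exact (Vlub S s HS Hbd Hs).
Qed.

End IntegralOperators.

Section IdentityOperator.
Variables (K : idem_semiring) (X : Type).

Definition delta (x : X) : X -> K :=
  fun y => if excluded_middle_informative (x = y) then sr_one K else sr_zero K.

Lemma is_lub_kernel_terms_delta f :
  is_lub (@fle K X) (kernel_terms (W := fun_semimodule K X) delta f) f.
Proof.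
  split.
  - intros w [x ->] y. simpl. unfold fsmul, delta.
    destruct (excluded_middle_informative (x = y)) as [->|_].
    + rewrite sr_mul1r. apply sr_addI.
    + rewrite sr_mul0r. apply sr_le0x.
  - intros b Hb y. specialize (Hb _ (ex_intro _ y eq_refl) y).
    simpl in Hb. unfold fsmul, delta in Hb.
    destruct (excluded_middle_informative (y = y)) as [_|]; [| congruence].
    rewrite sr_mul1r in Hb. exact Hb.
Qed.

Lemma integral_operator_id V :
  integral_operator V (fun f : X -> K => f : fun_semimodule K X).
Proof.
  exists delta. intros f _.
  pose proof (is_lub_eq_le (@sm_le_fun_semimodule K X) (is_lub_kernel_terms_delta f)) as Hf.
  split; [exists f; apply Hf | exact Hf].
Qed.

Lemma functional_b_semimodule_of_b_linear_id V :
  functional_semimodule V -> b_linear V (fun f : X -> K => f : fun_semimodule K X) ->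
  functional_b_semimodule V.
Proof.
  intros [Vsmul [_ [Vpair _]]] [Hadd [_ Hlub]]. split; [| split].
  - intros f g Vf Vg. destruct (Vpair f g Vf Vg) as [h Hh].
    change (V (sm_add (fun_semimodule K X) f g)). rewrite <- (Hadd f g h Vf Vg Hh).
    exact (proj1 Hh).
  - exact Vsmul.
  - intros S s HS Hbd Hs.
    apply (is_lub_eq_set (S := img (fun f => f) S)).
    + intros f. split; [intros [g [Sg ->]]; exact Sg | intros Sf; exists f; auto].
    + exact (is_lub_eq_le (@sm_le_fun_semimodule_fle K X) (Hlub S s HS Hbd Hs)).
Qed.

End IdentityOperator.

Theorem proposition7p21 (K : idem_semiring) (HK : b_complete_semiring K)
  (X : Type) (HX : inhabited X) (V : (X -> K) -> Prop)
  (HV : functional_semimodule V) (HVb : b_complete_functional_semimodule V) :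
  functional_b_semimodule V <->
  (forall (W : idem_semimodule K), b_complete_semimodule W ->
     forall A : (X -> K) -> W, integral_operator V A -> b_linear V A).
Proof.
  split.
  - intros HVfb W HW A HA. exact (integral_operator_b_linear HW HVfb HA).
  - intros Hint. apply functional_b_semimodule_of_b_linear_id; [exact HV |].
    apply Hint; [exact (fun_semimodule_b_complete X HK) | apply integral_operator_id].
Qed.
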